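(* Let $(G,f)$ be a tensor network where $G=(\mathcal V,\mathcal E)$ admits an $(s,t)$-bipolar orientation for some vertices $s,t\in\mathcal V$. Then \[|\mathrm{val}(G,f)|\le\|f(s)\|_F\,\|f(t)\|_F\prod_{v\in\mathcal V\setminus\{s,t\}}\|f(v)\|_{\mathrm{mat}\text{-}\mathrm{op}}\prod_{e\in\mathcal E}\|f(e)\|_{\mathrm{op}}.\]
   Context: Tensor network: a pair $(G,f)$ where $G=(\mathcal V,\mathcal E)$ is a finite multigraph without self-loops, each vertex $v$ has an ordered list $\partial v$ of its incident edges ($\deg(v)=|\partial v|$, counting multiplicity), each edge $e=(u,v)$ has an ordering of its endpoints; $f(v)\in(\mathbb R^n)^{\otimes\deg(v)}$ for $v\in\mathcal V$ and $f(e)\in\mathbb R^{n\times n}$ for $e\in\mathcal E$. Its value is $\mathrm{val}(G,f)=\sum_{(i_{v,e})}\prod_{v\in\mathcal V}f(v)[i_{v,e}:e\in\partial v]\prod_{e=(u,v)\in\mathcal E}f(e)[i_{u,e},i_{v,e}]$, summing over one index $i_{v,e}\in[n]$ for each incident vertex–edge pair. Bipolar orientation: $G$ admits an $(s,t)$-bipolar orientation if its edges can be directed so that there are no directed cycles, $s$ is the unique source (no incoming edges) and $t$ the unique sink (no outgoing edges). Norms: for a tensor $T\in(\mathbb R^n)^{\otimes k}$, $\|T\|_F$ is the Euclidean norm of its vectorization; for a partition $[k]=I\sqcup J$, $\|T\|_{I\to J}$ is the operator norm of the matricization of $T$ with row indices $I$ and column indices $J$; $\|T\|_{\mathrm{mat}\text{-}\mathrm{op}}=\max\{\|T\|_{I\to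 J}: I\sqcup J=[k],\ |I|\ge1,\ |J|\ge1\}$. $\|\cdot\|_{\mathrm{op}}$ is the matrix operator norm. *)

From HB Require Import structures.
From mathcomp Require Import all_boot all_order all_algebra.
From mathcomp Require Import boolp classical_sets reals.
Set Implicit Arguments.
Unset Strict Implicit.
Unset Printing Implicit Defensive.
Import Order.TTheory GRing.Theory Num.Theory.
Local Open Scope ring_scope.
Local Open Scope classical_set_scope.

(* Vertices V, edges E (finite types).  Each edge e has an ordered pair of
   endpoints (esrc e, edst e).  Each vertex v has an ordered list of incident
   edges, given as port v : 'I_(deg v) -> E. *)
Record multigraph (V E : finType) := Multigraph {
  esrc : E -> V;
  edst : E -> V;
  deg  : V -> nat;
  port : forall v : V, 'I_(deg v) -> E
}.
Arguments esrc {V E} _ _.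
Arguments edst {V E} _ _.
Arguments deg {V E} _ _.
Arguments port {V E} _ _ _.

Definition wf_multigraph (V E : finType) (g : multigraph V E) : Prop :=
  [/\ forall e, esrc g e != edst g e,
      forall v, injective (port g v)
    & forall v e, (exists k, port g v k = e) <-> (esrc g e = v \/ edst g e = v)].

Definition otail (V E : finType) (g : multigraph V E) (dir : E -> bool) (e : E) : V :=
  if dir e then esrc g e else edst g e.
Definition ohead (V E : finType) (g : multigraph V E) (dir : E -> bool) (e : E) : V :=
  if dir e then edst g e else esrc g e.

Definition oarc (V E : finType) (g : multigraph V E) (dir : E -> bool) : rel V :=
  fun u w => [exists e, (otail g dir e == u) && (ohead g dir e == w)].

Definition oacyclic (V E : finType) (g : multigraph V E) (dir : E -> bool) : Prop :=
  forall u w, oarc g dir u w -> ~~ connect (oarc g dir) w u.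

Definition is_source (V E : finType) (g : multigraph V E) (dir : E -> bool) (v : V) : Prop :=
  forall e, ohead g dir e != v.
Definition is_sink (V E : finType) (g : multigraph V E) (dir : E -> bool) (v : V) : Prop :=
  forall e, otail g dir e != v.

Definition bipolar (V E : finType) (g : multigraph V E) (s t : V) : Prop :=
  s != t /\
  exists dir : E -> bool,
    [/\ oacyclic g dir,
        is_source g dir s, (forall v, is_source g dir v -> v = s),
        is_sink g dir t & (forall v, is_sink g dir v -> v = t)].

(* A tensor in (R^n)^{\otimes k}: a real function of a multi-index. *)
Definition tensor (R : realType) (n k : nat) := {ffun 'I_k -> 'I_n} -> R.

Definition l2 (R : realType) (T : finType) (x : T -> R) : R :=
  Num.sqrt (\sum_(i : T) x i ^+ 2).

Definition opnorm2 (R : realType) (RT CT : finType) (M : RT -> CT -> R) : R :=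
  sup [set y : R | exists b : CT -> R,
          l2 b <= 1 /\ y = l2 (fun r : RT => \sum_(c : CT) M r c * b c)].

Definition mxopnorm (R : realType) (n : nat) (A : 'M[R]_n) : R :=
  opnorm2 (fun i j : 'I_n => A i j).

Definition frob (R : realType) (n k : nat) (T : tensor R n k) : R := l2 T.

Definition merge (n k : nat) (I : {set 'I_k})
    (a : {ffun {j : 'I_k | j \in I} -> 'I_n})
    (b : {ffun {j : 'I_k | j \notin I} -> 'I_n}) : {ffun 'I_k -> 'I_n} :=
  [ffun j => match boolP (j \in I) with
             | AltTrue H => a (exist _ j H)
             | AltFalse H => b (exist _ j H)
             end].

(* || T ||_{I -> J} with J = complement of I: operator norm of the
   matricization with row indices I and column indices J *)
Definition matnorm (R : realType) (n k : nat) (T : tensor R n k) (I : {set 'I_k}) : R :=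
  opnorm2 (fun (a : {ffun {j : 'I_k | j \in I} -> 'I_n})
               (b : {ffun {j : 'I_k | j \notin I} -> 'I_n}) => T (merge a b)).

(* || T ||_{mat-op}: maximum over partitions with both parts nonempty
   (all matnorms are >= 0, so 0 is a neutral default) *)
Definition matopnorm (R : realType) (n k : nat) (T : tensor R n k) : R :=
  \big[Num.max/0]_(I : {set 'I_k} | (0 < #|I|)%N && (#|I| < k)%N) matnorm T I.

(* The indices i_{v,e} for incident pairs are encoded as i (e, false) for
   v = esrc e and i (e, true) for v = edst e. *)
Definition tn_val (R : realType) (n : nat) (V E : finType) (g : multigraph V E)
    (fv : forall v : V, tensor R n (deg g v)) (fe : E -> 'M[R]_n) : R :=
  \sum_(i : {ffun E * bool -> 'I_n})
     (\prod_(v : V) fv v [ffun k => i (port g v k, edst g (port g v k) == v)])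
   * (\prod_(e : E) fe e (i (e, false)) (i (e, true))).

From Pilot Require Import Defs.
From HB Require Import structures.
From mathcomp Require Import all_boot all_order all_algebra.
From mathcomp Require Import boolp reals.
From mathcomp Require classical_sets.
From mathcomp Require Import ring lra zify.
Import Order.TTheory GRing.Theory Num.Theory.
Local Open Scope ring_scope.
Set Implicit Arguments.
Unset Strict Implicit.
Unset Printing Implicit Defensive.

(* Orient G bipolarly and list its vertices and edges in a topological order,
   each edge between its tail and its head.  Contract the network one factor at
   a time in this order.  After contracting a predecessor-closed set of factors
   one holds a tensor in the dangling indices; contracting the next factor,
   viewed as a bilinear form from its incoming to its outgoing indices,
   multiplies the Euclidean norm of that tensor at most by the norm of the form
   (Cauchy-Schwarz on each fibre of the remaining indices).  This norm is
   ||f(s)||_F for the source, which has no incoming index, ||f(t)||_F for the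
   sink, at most the mat-op norm of f(v) for an inner vertex, which has both
   incoming and outgoing indices, and ||f(e)||_op for an edge.  Once every
   factor is contracted, the tensor is the scalar val(G, f). *)

Lemma disjointsP (T : finType) (A B : {set T}) :
  reflect (forall x, x \in A -> x \in B -> False) [disjoint A & B].
Proof.
rewrite disjoints_subset; apply: (iffP subsetP) => [AB x /AB | AB x /AB xB].
  by rewrite inE => /negP.
by rewrite inE; apply/negP.
Qed.

Section CauchySchwarz.
Variable R : realType.

Lemma cauchy_schwarz (T : finType) (P : pred T) (a b : T -> R) :
  (\sum_(j | P j) a j * b j) ^+ 2 <=
  (\sum_(j | P j) a j ^+ 2) * (\sum_(j | P j) b j ^+ 2).
Proof.
set A := \sum_(j | P j) a j ^+ 2; set B := \sum_(j | P j) b j ^+ 2.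
set C := \sum_(j | P j) a j * b j.
have lagrange : \sum_(i | P i) \sum_(j | P j) (a i * b j - a j * b i) ^+ 2 =
    A * B + B * A - 2 * (C * C).
  rewrite /A /B /C !big_distrlr /= mulr_sumr -big_split -sumrB /=.
  apply: eq_bigr => i _; rewrite mulr_sumr -big_split -sumrB /=.
  by apply: eq_bigr => j _; ring.
have : 0 <= \sum_(i | P i) \sum_(j | P j) (a i * b j - a j * b i) ^+ 2.
  by apply: sumr_ge0 => i _; apply: sumr_ge0 => j _; apply: sqr_ge0.
rewrite lagrange expr2; nra.
Qed.

Lemma cauchy_schwarz_sqrt (T : finType) (P : pred T) (a b : T -> R) :
  `|\sum_(j | P j) a j * b j| <=
  Num.sqrt (\sum_(j | P j) a j ^+ 2) * Num.sqrt (\sum_(j | P j) b j ^+ 2).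
Proof.
rewrite -sqrtr_sqr -sqrtrM; last by apply: sumr_ge0 => j _; apply: sqr_ge0.
exact/ler_wsqrtr/cauchy_schwarz.
Qed.

End CauchySchwarz.

Section OperatorNorm.
Import classical_sets.
Variables (R : realType) (RT CT : finType).
Implicit Types (M : RT -> CT -> R) (b : CT -> R).

Local Notation matvec M b := (fun r : RT => \sum_(c : CT) M r c * b c).

Lemma l2_ge0 (T : finType) (x : T -> R) : 0 <= l2 x.
Proof. exact: sqrtr_ge0. Qed.

Lemma l2_0 (T : finType) : l2 (fun _ : T => 0 : R) = 0.
Proof. by rewrite /l2 big1 ?sqrtr0 // => t _; rewrite expr0n. Qed.

Lemma l2_eq0 (T : finType) (x : T -> R) : l2 x = 0 -> x = (fun _ => 0).
Proof.
move/eqP; rewrite sqrtr_eq0 => le0; apply: funext => t.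
have x2_ge0 i : xpredT i -> 0 <= x i ^+ 2 by move=> _; apply: sqr_ge0.
have /eqP sum0 : \sum_t x t ^+ 2 == 0 by rewrite eq_le le0 sumr_ge0.
by apply/eqP; rewrite -sqrf_eq0 (psumr_eq0P x2_ge0 sum0).
Qed.

Lemma l2_matvec0 M : l2 (matvec M (fun _ => 0)) = 0.
Proof.
apply: etrans (l2_0 RT); congr l2; apply: funext => r.
by rewrite big1 // => c _; rewrite mulr0.
Qed.

Lemma l2Z (T : finType) (k : R) (x : T -> R) :
  l2 (fun t => k * x t) = `|k| * l2 x.
Proof.
rewrite /l2 -sqrtr_sqr -sqrtrM ?sqr_ge0 // mulr_sumr.
by congr Num.sqrt; apply: eq_bigr => t _; rewrite exprMn.
Qed.

Lemma l2_matvec_le_frob M b :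
  l2 (matvec M b) <= Num.sqrt (\sum_r \sum_c M r c ^+ 2) * l2 b.
Proof.
rewrite /l2 -sqrtrM; last by apply: sumr_ge0 => r _; apply: sumr_ge0 => c _; apply: sqr_ge0.
apply: ler_wsqrtr; rewrite mulr_suml; apply: ler_sum => r _.
exact: (cauchy_schwarz xpredT).
Qed.

Lemma opnorm2_has_sup M :
  has_sup [set y : R | exists b, l2 b <= 1 /\ y = l2 (matvec M b)].
Proof.
split; first by exists 0, (fun _ => 0); rewrite l2_0 l2_matvec0 ler01.
exists (Num.sqrt (\sum_r \sum_c M r c ^+ 2)) => _ [b [b1 ->]].
apply: le_trans (l2_matvec_le_frob M b) _.
by rewrite -[leRHS]mulr1 ler_wpM2l ?sqrtr_ge0.
Qed.

Lemma opnorm2_ub M b : l2 b <= 1 -> l2 (matvec M b) <= opnorm2 M.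
Proof. by move=> b1; apply: (sup_upper_bound (opnorm2_has_sup M)); exists b. Qed.

Lemma opnorm2_ge0 M : 0 <= opnorm2 M.
Proof.
apply: le_trans (opnorm2_ub M (b := fun _ => 0) _); last by rewrite l2_0 ler01.
exact: l2_ge0.
Qed.

Lemma l2_matvec_le M b : l2 (matvec M b) <= opnorm2 M * l2 b.
Proof.
have [/l2_eq0 b0 | b_neq0] := eqVneq (l2 b) 0.
  by rewrite b0 l2_0 l2_matvec0 mulr0.
have b_gt0 : 0 < l2 b by rewrite lt_def b_neq0 l2_ge0.
have unit_b : l2 (fun c => (l2 b)^-1 * b c) <= 1.
  by rewrite l2Z ger0_norm ?invr_ge0 ?l2_ge0 // mulVf.
have := opnorm2_ub M unit_b.
under eq_fun => r do under eq_bigr => c _ do rewrite mulrCA.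
under eq_fun => r do rewrite -mulr_sumr.
by rewrite l2Z ger0_norm ?invr_ge0 ?l2_ge0 // ler_pdivrMl // mulrC.
Qed.

End OperatorNorm.

Section Marginals.
Variables (R : realType) (K : finType) (n : nat).
Local Notation X := {ffun K -> 'I_n}.
Implicit Types (S D : {set K}) (f : X -> R) (i j x : X).

Definition agree_on S i j : bool := [forall k in S, i k == j k].

Lemma agree_onP S i j : reflect (forall k, k \in S -> i k = j k) (agree_on S i j).
Proof. by apply: (iffP forall_inP) => [H k /H /eqP | H k /H ->]. Qed.

Lemma agree_on_setT i j : agree_on [set: K] i j = (i == j).
Proof. by apply/agree_onP/eqP => [H|-> //]; apply/ffunP => k; rewrite H ?inE. Qed.

Definition depends_on S f := forall i j, agree_on S i j -> f i = f j.

Definition sum_on S f i := \sum_(j | agree_on (~: S) j i) f j.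

Definition norm_on S f i := Num.sqrt (sum_on S (fun j => f j ^+ 2) i).

Definition patch S x j : X := [ffun k => if k \in S then x k else j k].

(* [h a i], for [a : A], enumerates without repetition the multi-indices that
   agree with [i] off [S], and its coordinates in [S] depend on [a] only. *)
Definition fibre_param S (A : finType) (h : A -> X -> X) :=
  [/\ forall a i, agree_on (~: S) (h a i) i,
      forall a i i', agree_on S (h a i) (h a i')
    & exists2 g : X -> A, (forall a i, g (h a i) = a)
        & forall i y, agree_on (~: S) y i -> h (g y) i = y].

Lemma sum_on_param S (A : finType) (h : A -> X -> X) f i :
  fibre_param S h -> sum_on S f i = \sum_(a : A) f (h a i).
Proof.
case=> h_off _ [g gK hK].
rewrite /sum_on (reindex (h^~ i)) /=; last first.
  by exists g => [a _ | y]; [exact: gK | rewrite inE => /hK; apply].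
by apply: eq_bigl => a; rewrite h_off.
Qed.

Definition override (J : finType) (sg : J -> K) (a : {ffun J -> 'I_n}) i : X :=
  [ffun k => if [pick j | sg j == k] is Some j then a j else i k].

Section Override.
Variables (J : finType) (sg : J -> K).
Hypothesis sg_inj : injective sg.

Lemma override_in a i p : override sg a i (sg p) = a p.
Proof.
rewrite ffunE; case: pickP => [p' /eqP/sg_inj -> // | /(_ p)].
by rewrite eqxx.
Qed.

Lemma override_out a i k : k \notin codom sg -> override sg a i k = i k.
Proof.
move=> k_out; rewrite ffunE; case: pickP => [p /eqP kE | //].
by rewrite -kE codom_f in k_out.
Qed.

Lemma override_param S : S =i codom sg -> fibre_param S (override sg).
Proof.
move=> S_codom; split.
- move=> a i; apply/agree_onP => k; rewrite inE S_codom; exact: override_out.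
- move=> a i i'; apply/agree_onP => k; rewrite S_codom => /codomP [p ->].
  by rewrite !override_in.
- exists (fun y => [ffun p => y (sg p)]) => [a i | i y /agree_onP y_off].
    by apply/ffunP => p; rewrite ffunE override_in.
  apply/ffunP => k; have [/codomP [p ->] | k_out] := boolP (k \in codom sg).
    by rewrite override_in ffunE.
  by rewrite override_out // y_off // inE S_codom.
Qed.

End Override.

Lemma sig_param S : fibre_param S (@override {k : K | k \in S} val).
Proof.
apply: override_param; first exact: val_inj.
move=> k; apply/idP/codomP => [kS | [[k' kS] ->] //].
by exists (exist _ k kS).
Qed.

Definition set_at (k0 : K) (a : 'I_n) i : X := [ffun k => if k == k0 then a else i k].

Lemma set_at_param k0 : fibre_param [set k0] (set_at k0).
Proof.
split.
- by move=> a i; apply/agree_onP => k; rewrite !inE ffunE => /negbTE ->.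
- by move=> a i i'; apply/agree_onP => k; rewrite !inE !ffunE => ->.
- exists (fun y => y k0) => [a i | i y /agree_onP y_off]; first by rewrite ffunE eqxx.
  apply/ffunP => k; rewrite ffunE.
  by case: eqP => [-> // | /eqP k_ne]; rewrite y_off // !inE.
Qed.

Lemma sum_on_setT f i : sum_on [set: K] f i = \sum_j f j.
Proof. by apply: eq_bigl => j; apply/agree_onP => k; rewrite !inE. Qed.

Lemma sum_on_set0 f i : sum_on set0 f i = f i.
Proof. by rewrite /sum_on (big_pred1 i) // => j; rewrite setC0 agree_on_setT. Qed.

Lemma sum_on_ge S f i : (forall j, 0 <= f j) -> f i <= sum_on S f i.
Proof.
move=> f_ge0; rewrite /sum_on (bigD1 i) /=; last exact/agree_onP.
by rewrite lerDl; apply: sumr_ge0.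
Qed.

Lemma sum_on_sqr_ge0 S f i : 0 <= sum_on S (fun j => f j ^+ 2) i.
Proof. by apply: sumr_ge0 => j _; apply: sqr_ge0. Qed.

Lemma norm_on_ge0 S f i : 0 <= norm_on S f i.
Proof. exact: sqrtr_ge0. Qed.

Lemma norm_on_set0 f i : norm_on set0 f i = `|f i|.
Proof. by rewrite /norm_on sum_on_set0 sqrtr_sqr. Qed.

Lemma abs_le_norm_on S f i : `|f i| <= norm_on S f i.
Proof.
rewrite -sqrtr_sqr ler_wsqrtr //; apply: sum_on_ge => j; exact: sqr_ge0.
Qed.

Lemma depends_on_sub D D' f : D \subset D' -> depends_on D f -> depends_on D' f.
Proof.
move=> /subsetP sDD' f_D i j /agree_onP ij; apply: f_D.
by apply/agree_onP => k /sDD'; apply: ij.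
Qed.

Lemma depends_on_prod (J : finType) (A : {set J}) (D : J -> {set K}) (F : J -> X -> R) :
  (forall p, depends_on (D p) (F p)) ->
  depends_on (\bigcup_(p in A) D p) (fun x => \prod_(p in A) F p x).
Proof.
move=> F_D i i' /agree_onP ii'; apply: eq_bigr => p pA; apply: F_D.
by apply/agree_onP => k kD; apply: ii'; apply/bigcupP; exists p.
Qed.

Lemma depends_on_patch S f j : depends_on S (fun x => f (patch S x j)).
Proof.
move=> x x' /agree_onP xx'; congr f; apply/ffunP => k.
by rewrite !ffunE; case: ifP => // /xx'.
Qed.

Lemma sum_on_patch S f j : sum_on S (fun x => f (patch S x j)) j = sum_on S f j.
Proof.
apply: eq_bigr => x /agree_onP x_off; congr f; apply/ffunP => k.
by rewrite ffunE; case: ifP => // kS; rewrite x_off // inE kS.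
Qed.

Lemma sum_on_depends D S f : depends_on D f -> depends_on (D :\: S) (sum_on S f).
Proof.
move=> f_D i i' /agree_onP ii'; rewrite !(sum_on_param _ _ (sig_param S)).
case: (sig_param S) => p_off p_in _.
apply: eq_bigr => a _; apply: f_D; apply/agree_onP => k kD.
have [kS | kS] := boolP (k \in S); first exact/agree_onP/kS/p_in.
have /agree_onP -> := p_off a i; last by rewrite inE.
have /agree_onP -> := p_off a i'; last by rewrite inE.
by rewrite ii' // inE kD kS.
Qed.

Lemma sum_on_mull D S g f i : depends_on D g -> [disjoint D & S] ->
  sum_on S (fun j => g j * f j) i = g i * sum_on S f i.
Proof.
move=> g_D DS; rewrite /sum_on mulr_sumr; apply: eq_bigr => j /agree_onP j_off.
congr (_ * _); apply: g_D; apply/agree_onP => k kD; apply: j_off.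
by rewrite inE (disjointFr DS kD).
Qed.

Lemma sum_on_setU (A B : {set K}) f i : [disjoint A & B] ->
  sum_on (A :|: B) f i = sum_on A (sum_on B f) i.
Proof.
move=> AB; rewrite /sum_on.
rewrite (partition_big (fun y => patch A y i) (fun j => agree_on (~: A) j i)); last first.
  by move=> y _; apply/agree_onP => k; rewrite inE ffunE => /negbTE ->.
apply: eq_bigr => j /agree_onP j_off; apply: eq_bigl => y.
apply/andP/agree_onP => [[/agree_onP y_off /eqP <-] k | y_off].
  rewrite inE ffunE => kB; case: ifP => // kA.
  by rewrite y_off // !inE kA kB.
split.
  apply/agree_onP => k; rewrite !inE negb_or => /andP [kA kB].
  by rewrite y_off ?inE // j_off ?inE.
apply/eqP/ffunP => k; rewrite ffunE; case: ifP => kA.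
  by rewrite y_off // inE (disjointFr AB kA).
by rewrite j_off // inE kA.
Qed.

Definition form_bound (kap : X -> R) S1 S2 c :=
  forall psi chi, depends_on S1 psi -> depends_on S2 chi -> forall i,
   `|sum_on (S1 :|: S2) (fun j => psi j * kap j * chi j) i| <=
      c * norm_on S1 psi i * norm_on S2 chi i.

Lemma form_bound_sym kap S1 S2 c : form_bound kap S1 S2 c -> form_bound kap S2 S1 c.
Proof.
move=> kap_c psi chi psi_D chi_D i; rewrite setUC -mulrA [norm_on S2 _ _ * _]mulrC mulrA.
have -> : sum_on (S1 :|: S2) (fun j => psi j * kap j * chi j) i =
          sum_on (S1 :|: S2) (fun j => chi j * kap j * psi j) i.
  by apply: eq_bigr => j _; ring.
exact: kap_c.
Qed.

Lemma form_bound_le kap S1 S2 c c' : c <= c' -> form_bound kap S1 S2 c ->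
  form_bound kap S1 S2 c'.
Proof.
move=> cc' kap_c psi chi psi_D chi_D i; apply: le_trans (kap_c _ _ psi_D chi_D i) _.
by rewrite ler_wpM2r ?norm_on_ge0 // ler_wpM2r ?norm_on_ge0.
Qed.

Lemma form_bound_param S1 S2 (A1 A2 : finType) (h1 : A1 -> X -> X) (h2 : A2 -> X -> X)
    (M : A1 -> A2 -> R) kap :
  fibre_param S1 h1 -> fibre_param S2 h2 -> [disjoint S1 & S2] ->
  (forall a b i, kap (h2 b (h1 a i)) = M a b) ->
  form_bound kap S1 S2 (opnorm2 M).
Proof.
move=> p1 p2 S12 kapM psi chi psi_S1 chi_S2 i; have [p2_off p2_in _] := p2.
have term_eq a b : psi (h2 b (h1 a i)) * kap (h2 b (h1 a i)) * chi (h2 b (h1 a i)) =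
    psi (h1 a i) * (M a b * chi (h2 b i)).
  rewrite kapM -mulrA; congr (_ * (_ * _)); last exact/chi_S2/p2_in.
  apply: psi_S1; apply/agree_onP => k kS1; have /agree_onP := p2_off b (h1 a i); apply.
  by rewrite inE (disjointFr S12 kS1).
rewrite sum_on_setU // (sum_on_param _ _ p1).
under eq_bigr => a _ do rewrite (sum_on_param _ _ p2).
under eq_bigr => a _ do under eq_bigr => b _ do rewrite term_eq.
under eq_bigr => a _ do rewrite -mulr_sumr.
have -> : norm_on S1 psi i = l2 (fun a => psi (h1 a i)).
  by rewrite /norm_on (sum_on_param _ _ p1).
have -> : norm_on S2 chi i = l2 (fun b => chi (h2 b i)).
  by rewrite /norm_on (sum_on_param _ _ p2).
apply: le_trans (cauchy_schwarz_sqrt xpredT _ _) _.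
rewrite [X in _ <= X]mulrAC [X in _ <= X]mulrC.
by apply: ler_wpM2l; [apply: l2_ge0 | apply: l2_matvec_le].
Qed.

Lemma form_bound_set0l S kap c : depends_on S kap -> (forall i, norm_on S kap i <= c) ->
  form_bound kap set0 S c.
Proof.
move=> kap_S kap_c psi chi psi_0 chi_S i; rewrite set0U norm_on_set0.
have -> : sum_on S (fun j => psi j * kap j * chi j) i =
          sum_on S (fun j => psi j * (kap j * chi j)) i.
  by apply: eq_bigr => j _; rewrite mulrA.
rewrite (sum_on_mull _ i psi_0); last by rewrite disjoints_subset sub0set.
rewrite normrM [c * _]mulrC -mulrA; apply: ler_wpM2l => //.
apply: le_trans (ler_wpM2r (norm_on_ge0 S chi i) (kap_c i)).
exact: cauchy_schwarz_sqrt.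
Qed.

Lemma le_sqr_mul_of_le_sqrt (a b c : R) : 0 <= a -> 0 <= b ->
  a <= c * Num.sqrt b * Num.sqrt a -> a <= c ^+ 2 * b.
Proof.
move=> a_ge0 b_ge0 le_a; rewrite -(sqr_sqrtr a_ge0) -(sqr_sqrtr b_ge0).
rewrite -{1}(sqr_sqrtr a_ge0) in le_a.
move: le_a; set x := Num.sqrt a; set y := Num.sqrt b => le_x.
(* c^2 y^2 >= 2 c y x - x^2 >= x^2, the first step being (c y - x)^2 >= 0 *)
have := sqr_ge0 (c * y - x); nra.
Qed.

Section Contraction.
Variables (D S1 S2 : {set K}) (phi kap : X -> R) (c : R).
Hypotheses (S12 : [disjoint S1 & S2]) (S1_D : S1 \subset D) (S2_D : [disjoint S2 & D])
  (phi_D : depends_on D phi) (kap_c : form_bound kap S1 S2 c) (c_ge0 : 0 <= c).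

Let Psi := sum_on S1 (fun x => phi x * kap x).

Lemma contract_fibre_le j :
  sum_on S2 (fun z => Psi z ^+ 2) j <= c ^+ 2 * sum_on S1 (fun y => phi y ^+ 2) j.
Proof.
have fibre_eq : sum_on (S1 :|: S2)
    (fun y => phi (patch S1 y j) * kap y * Psi (patch S2 y j)) j =
  sum_on S2 (fun z => Psi z ^+ 2) j.
  rewrite setUC sum_on_setU 1?disjoint_sym //.
  apply: eq_bigr => z /agree_onP z_off; rewrite expr2 {1}/Psi /sum_on mulr_suml.
  apply: eq_bigr => y /agree_onP y_off.
  have -> : patch S2 y j = z.
    apply/ffunP => k; rewrite ffunE; case: ifP => kS2; last by rewrite z_off // inE kS2.
    by rewrite y_off // inE (disjointFl S12 kS2).
  have -> // : phi (patch S1 y j) = phi y.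
  apply: phi_D; apply/agree_onP => k kD; rewrite ffunE; case: ifP => // kS1.
  by rewrite y_off ?inE ?kS1 // z_off // inE (disjointFl S2_D kD).
have := kap_c (@depends_on_patch S1 phi j) (@depends_on_patch S2 Psi j) j.
rewrite fibre_eq /norm_on (@sum_on_patch S1 (fun y => phi y ^+ 2))
  (@sum_on_patch S2 (fun z => Psi z ^+ 2)).
rewrite ger0_norm ?sum_on_sqr_ge0 //.
by apply: le_sqr_mul_of_le_sqrt; apply: sum_on_sqr_ge0.
Qed.

Lemma norm_on_contract i : norm_on ((D :\: S1) :|: S2) Psi i <= c * norm_on D phi i.
Proof.
have D_split : D = (D :\: S1) :|: S1.
  by apply/esym; rewrite setUC -{1}(setIidPl S1_D) setIC setID.
have DS1 : [disjoint D :\: S1 & S1] by rewrite disjoints_subset subsetDr.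
have DS2 : [disjoint D :\: S1 & S2].
  by apply: disjointWl (subsetDl D S1) _; rewrite disjoint_sym.
rewrite /norm_on [in X in _ <= _ * X]D_split !sum_on_setU //.
rewrite -[c]ger0_norm // -sqrtr_sqr -sqrtrM ?sqr_ge0 // ler_wsqrtr //.
by rewrite /sum_on mulr_sumr; apply: ler_sum => j _; apply: contract_fibre_le.
Qed.

End Contraction.

Section Sweep.
Variables (J : finType) (In Out : J -> {set K}) (F : J -> X -> R) (c : J -> R)
  (rank : J -> nat).
Hypotheses (F_dep : forall p, depends_on (In p :|: Out p) (F p))
  (F_bound : forall p, form_bound (F p) (In p) (Out p) (c p))
  (c_ge0 : forall p, 0 <= c p)
  (out_cover : forall k, exists p, k \in Out p)
  (out_uniq : forall k p q, k \in Out p -> k \in Out q -> p = q)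
  (in_cover : forall k, exists q, k \in In q)
  (in_uniq : forall k p q, k \in In p -> k \in In q -> p = q)
  (rank_lt : forall k p q, k \in Out p -> k \in In q -> (rank p < rank q)%N).

Definition consumed (A : {set J}) := \bigcup_(p in A) In p.

Definition dangling (A : {set J}) := (\bigcup_(p in A) Out p) :\: consumed A.

Definition contraction (A : {set J}) :=
  sum_on (consumed A) (fun x => \prod_(p in A) F p x).

Definition pred_closed (A : {set J}) :=
  forall p q k, q \in A -> k \in In q -> k \in Out p -> p \in A.

Lemma contraction_depends A : depends_on (dangling A) (contraction A).
Proof.
apply: depends_on_sub (sum_on_depends (S := consumed A) (depends_on_prod (A := A) F_dep)).
apply/subsetP => k; rewrite !inE => /andP [k_nc /bigcupP [p pA]].
rewrite inE => /orP [kI | kO]; first by case/negP: k_nc; apply/bigcupP; exists p.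
by rewrite k_nc; apply/bigcupP; exists p.
Qed.

Lemma Out_In_disjoint p : [disjoint Out p & In p].
Proof. by apply/disjointsP => k kO /(rank_lt kO); rewrite ltnn. Qed.

Section Peel.
Variables (A : {set J}) (p : J).
Hypotheses (pA : p \in A) (p_max : forall q, q \in A -> (rank q <= rank p)%N)
  (A_closed : pred_closed A).

Lemma pred_closed_peel : pred_closed (A :\ p).
Proof.
move=> q q' k; rewrite !inE => /andP [_ q'A] kI kO.
rewrite (A_closed q'A kI kO) andbT; apply/eqP => qp.
by move: (rank_lt kO kI); rewrite qp ltnNge p_max.
Qed.

Lemma Out_consumed_peel : [disjoint Out p & consumed (A :\ p)].
Proof.
apply/bigcup_disjointP => q; rewrite !inE => /andP [_ qA].
by apply/disjointsP => k kO /(rank_lt kO); rewrite ltnNge p_max.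
Qed.

Lemma In_consumed_peel : [disjoint In p & consumed (A :\ p)].
Proof.
apply/bigcup_disjointP => q; rewrite !inE => /andP [qp _].
by apply/disjointsP => k kI /(in_uniq kI) pq; rewrite pq eqxx in qp.
Qed.

Lemma consumed_peel : consumed A = In p :|: consumed (A :\ p).
Proof. by rewrite /consumed (big_setD1 p pA). Qed.

Lemma In_sub_dangling_peel : In p \subset dangling (A :\ p).
Proof.
apply/subsetP => k kI; have [q kO] := out_cover k.
rewrite inE (disjointFr In_consumed_peel kI) /=; apply/bigcupP; exists q => //.
rewrite !inE (A_closed pA kI kO) andbT; apply: contraTneq kO => ->.
by rewrite (disjointFl (Out_In_disjoint p) kI).
Qed.

Lemma Out_dangling_peel : [disjoint Out p & dangling (A :\ p)].
Proof.
apply/disjointsP => k kO; rewrite inE => /andP [_ /bigcupP [q]].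
by rewrite !inE => /andP [qp _] /(out_uniq kO) pq; rewrite pq eqxx in qp.
Qed.

Lemma dangling_peel : dangling A = (dangling (A :\ p) :\: In p) :|: Out p.
Proof.
apply/setP => k; rewrite /dangling consumed_peel (big_setD1 p pA) !inE.
have [kO | kO] := boolP (k \in Out p).
  by rewrite (disjointFr (Out_In_disjoint p) kO) (disjointFr Out_consumed_peel kO) orbT.
by rewrite /= orbF; case: (k \in In p); rewrite ?andbF //= andbC.
Qed.

Lemma contraction_peel :
  contraction A = sum_on (In p) (fun x => contraction (A :\ p) x * F p x).
Proof.
apply: funext => x; rewrite /contraction consumed_peel sum_on_setU ?In_consumed_peel //.
apply: eq_bigr => z _; rewrite /contraction mulrC -(sum_on_mull _ _ (@F_dep p)).
  by apply: eq_bigr => y _; rewrite (big_setD1 p pA).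
apply/disjointsP => k; rewrite inE => /orP [kI | kO].
  by rewrite (disjointFr In_consumed_peel kI).
by rewrite (disjointFr Out_consumed_peel kO).
Qed.

End Peel.

Lemma norm_contraction_le m (A : {set J}) : #|A| = m -> pred_closed A ->
  forall i, norm_on (dangling A) (contraction A) i <= \prod_(p in A) c p.
Proof.
elim: m A => [|m IH] A cardA A_closed i.
  rewrite (cards0_eq cardA) /dangling /contraction /consumed !big_set0 setDv.
  by rewrite norm_on_set0 sum_on_set0 big_set0 normr1.
have [p0 p0A] : exists p, p \in A by apply/set0Pn; rewrite -card_gt0 cardA.
have [p pA p_max] : exists2 p, p \in A & forall q, q \in A -> (rank q <= rank p)%N.
  by case: (arg_maxnP rank p0A) => p; exists p.
have cardA' : #|A :\ p| = m by move: cardA; rewrite (cardsD1 p) pA add1n => -[].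
rewrite (contraction_peel pA p_max) (dangling_peel pA p_max) (big_setD1 p pA) /=.
have In_Out : [disjoint In p & Out p] by rewrite disjoint_sym Out_In_disjoint.
apply: le_trans (norm_on_contract In_Out (In_sub_dangling_peel pA A_closed)
  (Out_dangling_peel A p) (@contraction_depends _) (@F_bound p) (c_ge0 p) i) _.
by rewrite ler_wpM2l // IH //; apply: pred_closed_peel.
Qed.

Lemma abs_sum_prod_le : `|\sum_x \prod_p F p x| <= \prod_p c p.
Proof.
have [i _ | X0] := pickP (@predT X); last first.
  by rewrite [\sum_x _]big_pred0 // normr0 prodr_ge0.
have full_closed : pred_closed [set: J] by move=> *; rewrite inE.
have consumed_full : consumed [set: J] = [set: K].
  apply/setP => k; rewrite inE; have [q kq] := in_cover k.
  by apply/bigcupP; exists q; rewrite ?inE.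
have -> : \sum_x \prod_p F p x = contraction [set: J] i.
  rewrite /contraction consumed_full sum_on_setT; apply: eq_bigr => x _.
  by apply: eq_bigl => p; rewrite inE.
rewrite (eq_bigl (fun p => p \in [set: J])) => [|p]; last by rewrite inE.
exact: le_trans (abs_le_norm_on _ _ _) (norm_contraction_le erefl full_closed i).
Qed.

End Sweep.

End Marginals.

Section Merge.
Variables (n k : nat) (I : {set 'I_k}).
Variables (a : {ffun {j : 'I_k | j \in I} -> 'I_n})
  (b : {ffun {j : 'I_k | j \notin I} -> 'I_n}).

Lemma merge_in j (jI : j \in I) : Defs.merge a b j = a (exist _ j jI).
Proof.
rewrite ffunE; destruct (boolP (j \in I)) as [jI' | jI']; last by case/negP: jI'.
by rewrite (bool_irrelevance jI' jI).
Qed.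

Lemma merge_out j (jI : j \notin I) : Defs.merge a b j = b (exist _ j jI).
Proof.
rewrite ffunE; destruct (boolP (j \in I)) as [jI' | jI']; first by case/negP: jI.
by rewrite (bool_irrelevance jI' jI).
Qed.

End Merge.

Unset Implicit Arguments.

Section BipolarNetwork.
Variables (R : realType) (n : nat) (V E : finType) (g : multigraph V E)
  (fv : forall v : V, tensor R n (deg g v)) (fe : E -> 'M[R]_n) (s t : V)
  (dir : E -> bool).
Hypotheses (no_loop : forall e, esrc g e != edst g e)
  (port_inj : forall v, injective (port g v))
  (port_incident : forall v e,
     (exists k, port g v k = e) <-> (esrc g e = v \/ edst g e = v)).
Hypotheses (acyclic : oacyclic g dir)
  (s_source : is_source g dir s) (s_uniq : forall v, is_source g dir v -> v = s)
  (t_sink : is_sink g dir t) (t_uniq : forall v, is_sink g dir v -> v = t).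

Local Notation K := (E * bool)%type.
Local Notation X := {ffun K -> 'I_n}.
Local Notation oh := (Defs.ohead g dir).
Local Notation ot := (Defs.otail g dir).

Lemma ohead_neq_otail e : oh e != ot e.
Proof. by rewrite /Defs.ohead /Defs.otail; case: (dir e); rewrite // eq_sym. Qed.

Lemma incident_oriented v e : (esrc g e = v \/ edst g e = v) <-> (oh e = v \/ ot e = v).
Proof. by rewrite /Defs.ohead /Defs.otail; case: (dir e); tauto. Qed.

Lemma port_of_ohead v e : oh e = v -> exists k, port g v k = e.
Proof. by move=> ev; apply/port_incident/incident_oriented; left. Qed.

Lemma port_of_otail v e : ot e = v -> exists k, port g v k = e.
Proof. by move=> ev; apply/port_incident/incident_oriented; right. Qed.

Lemma port_oriented v k : oh (port g v k) = v \/ ot (port g v k) = v.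
Proof. by apply/incident_oriented/(port_incident v); exists k. Qed.

Lemma edst_ohead e v : oh e = v -> (edst g e == v) = dir e.
Proof.
by rewrite /Defs.ohead; case: (dir e) => <-; rewrite ?eqxx // eq_sym (negbTE (no_loop e)).
Qed.

Lemma edst_otail e v : ot e = v -> (edst g e == v) = ~~ dir e.
Proof.
by rewrite /Defs.otail; case: (dir e) => <-; rewrite ?eqxx // eq_sym (negbTE (no_loop e)).
Qed.

Definition depth (v : V) : nat := #|[set u | connect (oarc g dir) u v]|.

Lemma depth_lt e : (depth (ot e) < depth (oh e))%N.
Proof.
have arc : oarc g dir (ot e) (oh e) by apply/existsP; exists e; rewrite !eqxx.
apply: proper_card; apply/properP; split.
  by apply/subsetP => u; rewrite !inE => /connect_trans; apply; apply: connect1.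
by exists (oh e); rewrite inE ?connect0 // acyclic.
Qed.

Definition vport v (k : 'I_(deg g v)) : K := (port g v k, edst g (port g v k) == v).

Lemma vport_inj v : injective (vport v).
Proof. by move=> k k' [] /port_inj. Qed.

Definition vertex_fn v (i : X) : R := fv v [ffun k => i (vport v k)].

Definition edge_fn e (i : X) : R := fe e (i (e, false)) (i (e, true)).

Definition in_ports (p : V + E) : {set K} :=
  match p with
  | inl v => [set k : K | (oh k.1 == v) && (k.2 == dir k.1)]
  | inr e => [set (e, ~~ dir e)]
  end.

Definition out_ports (p : V + E) : {set K} :=
  match p with
  | inl v => [set k : K | (ot k.1 == v) && (k.2 == ~~ dir k.1)]
  | inr e => [set (e, dir e)]
  end.

Definition factor_fn (p : V + E) : X -> R :=
  match p with inl v => vertex_fn v | inr e => edge_fn e end.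

Definition factor_cost (p : V + E) : R :=
  match p with
  | inl v => if (v == s) || (v == t) then frob (fv v) else matopnorm (fv v)
  | inr e => mxopnorm (fe e)
  end.

(* An edge is ranked strictly between its tail and its head. *)
Definition factor_rank (p : V + E) : nat :=
  match p with inl v => 2 * depth v | inr e => (2 * depth (ot e)).+1 end.

Definition in_vports v : {set 'I_(deg g v)} := [set k | oh (port g v k) == v].

Lemma vport_in_ports v k : (vport v k \in in_ports (inl v)) = (k \in in_vports v).
Proof.
rewrite !inE /=; have [kh | kh] := eqVneq (oh (port g v k)) v.
  by rewrite (edst_ohead _ _ kh) !eqxx.
case: (port_oriented v k) => [/eqP | kt]; first by rewrite (negbTE kh).
by rewrite (edst_otail _ _ kt); case: (dir _).
Qed.

Lemma vport_out_ports v k : (vport v k \in out_ports (inl v)) = (k \notin in_vports v).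
Proof.
rewrite !inE /=; have [kh | kh] := eqVneq (oh (port g v k)) v.
  have kt : ot (port g v k) != v by rewrite -{2}kh eq_sym ohead_neq_otail.
  by rewrite (negbTE kt).
case: (port_oriented v k) => [/eqP | kt]; first by rewrite (negbTE kh).
by rewrite kt (edst_otail _ _ kt) !eqxx.
Qed.

Lemma vport_onto v kk : kk \in in_ports (inl v) :|: out_ports (inl v) ->
  exists k, kk = vport v k.
Proof.
case: kk => e b; rewrite !inE /= => /orP [] /andP [/eqP ev /eqP ->].
  by have [k ke] := port_of_ohead _ _ ev; exists k; rewrite /vport ke (edst_ohead _ _ ev).
by have [k ke] := port_of_otail _ _ ev; exists k; rewrite /vport ke (edst_otail _ _ ev).
Qed.

Lemma vport_param v (J : finType) (sg : J -> 'I_(deg g v)) (S : {set K}) :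
  injective sg -> S \subset in_ports (inl v) :|: out_ports (inl v) ->
  (forall k, (vport v k \in S) = (k \in codom sg)) ->
  fibre_param (n := n) S (override (fun j => vport v (sg j))).
Proof.
move=> sg_inj S_sub S_vport; apply: override_param => [j j' /vport_inj/sg_inj // | kk].
apply/idP/codomP => [kkS | [j ->]]; last by rewrite S_vport codom_f.
have [k kkE] := vport_onto v kk (subsetP S_sub _ kkS).
by move: kkS; rewrite kkE S_vport => /codomP [j ->]; exists j.
Qed.

Lemma factor_fn_depends p : depends_on (in_ports p :|: out_ports p) (factor_fn p).
Proof.
case: p => [v | e] i i' /agree_onP ii' /=.
  rewrite /vertex_fn; congr (fv v); apply/ffunP => k; rewrite !ffunE; apply: ii'.
  by rewrite inE vport_in_ports vport_out_ports orbN.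
rewrite /edge_fn; congr (fe e _ _); apply: ii'; rewrite !inE.
  by case: (dir e); rewrite !eqxx ?orbT.
by case: (dir e); rewrite !eqxx ?orbT.
Qed.

Lemma out_ports_cover kk : exists p, kk \in out_ports p.
Proof.
case: kk => e b; have [-> | b_neq] := eqVneq b (dir e).
  by exists (inr e); rewrite inE.
by exists (inl (ot e)); rewrite inE /= eqxx; move: b_neq; case: b; case: (dir e).
Qed.

Lemma in_ports_cover kk : exists p, kk \in in_ports p.
Proof.
case: kk => e b; have [-> | b_neq] := eqVneq b (~~ dir e).
  by exists (inr e); rewrite inE.
by exists (inl (oh e)); rewrite inE /= eqxx; move: b_neq; case: b; case: (dir e).
Qed.

Lemma out_ports_uniq kk p q : kk \in out_ports p -> kk \in out_ports q -> p = q.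
Proof.
case: kk => e b; case: p => [v | e1]; case: q => [w | e2]; rewrite !inE /=.
- by move=> /andP [/eqP <- _] /andP [/eqP <- _].
- by move=> /andP [_ /eqP ->] /eqP [-> ]; case: (dir e2).
- by move=> /eqP [-> ->] /andP [_]; case: (dir e1).
- by move=> /eqP [-> _] /eqP [-> _].
Qed.

Lemma in_ports_uniq kk p q : kk \in in_ports p -> kk \in in_ports q -> p = q.
Proof.
case: kk => e b; case: p => [v | e1]; case: q => [w | e2]; rewrite !inE /=.
- by move=> /andP [/eqP <- _] /andP [/eqP <- _].
- by move=> /andP [_ /eqP ->] /eqP [-> ]; case: (dir e2).
- by move=> /eqP [-> ->] /andP [_]; case: (dir e1).
- by move=> /eqP [-> _] /eqP [-> _].
Qed.

Lemma factor_rank_lt kk p q : kk \in out_ports p -> kk \in in_ports q ->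
  (factor_rank p < factor_rank q)%N.
Proof.
case: kk => e b; case: p => [v | e1]; case: q => [w | e2]; rewrite !inE /=.
- by move=> /andP [_ /eqP ->] /andP [_]; case: (dir e).
- by move=> /andP [/eqP <- _] /eqP [-> _]; rewrite ltnS.
- by move=> /eqP [-> _] /andP [/eqP <- _]; have := depth_lt e1; lia.
- by move=> /eqP [-> ->] /eqP [<-]; case: (dir e1).
Qed.

Lemma in_vports_param v : fibre_param (n := n) (in_ports (inl v))
  (override (fun j : {k | k \in in_vports v} => vport v (val j))).
Proof.
apply: vport_param; [exact: val_inj | exact: subsetUl | move=> k].
by rewrite vport_in_ports codom_val.
Qed.

Lemma out_vports_param v : fibre_param (n := n) (out_ports (inl v))
  (override (fun j : {k | k \notin in_vports v} => vport v (val j))).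
Proof.
apply: vport_param; [exact: val_inj | exact: subsetUr | move=> k].
by rewrite vport_out_ports codom_val.
Qed.

Lemma form_bound_vertex v : form_bound (vertex_fn v) (in_ports (inl v)) (out_ports (inl v))
  (matnorm (fv v) (in_vports v)).
Proof.
apply: form_bound_param (in_vports_param v) (out_vports_param v) _ _ => [|a b i].
  apply/disjointsP => -[e b]; rewrite !inE /= => /andP [/eqP eh _] /andP [/eqP et _].
  by move: (ohead_neq_otail e); rewrite eh et eqxx.
have vport_val_inj (P : pred 'I_(deg g v)) :
    injective (fun j : {k | P k} => vport v (val j)).
  by move=> j j' /vport_inj /val_inj.
rewrite /vertex_fn; congr (fv v); apply/ffunP => k; rewrite [LHS]ffunE.
have [kI | kO] := boolP (k \in in_vports v).
  rewrite merge_in override_out.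
    exact: (override_in (vport_val_inj _) _ _ (exist _ k kI)).
  by apply/codomP => -[j /vport_inj kE]; move: (valP j); rewrite -kE kI.
by rewrite merge_out (override_in (vport_val_inj _) _ _ (exist _ k kO)).
Qed.

Lemma norm_on_vertex_full v (S : {set K}) i :
  S \subset in_ports (inl v) :|: out_ports (inl v) -> (forall k, vport v k \in S) ->
  norm_on S (vertex_fn v) i = frob (fv v).
Proof.
move=> S_sub S_all.
have S_param : fibre_param (n := n) S (override (fun k => vport v (id k))).
  by apply: vport_param S_sub _ => [|k]; [exact: inj_id | rewrite S_all codom_f].
rewrite /norm_on (sum_on_param _ _ S_param) /frob /l2; congr Num.sqrt.
apply: eq_bigr => a _; rewrite /vertex_fn; congr (fv v _ ^+ 2); apply/ffunP => k.
by rewrite ffunE (override_in (vport_inj v)).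
Qed.

Lemma in_ports_source : in_ports (inl s) = set0.
Proof. by apply/setP => -[e b]; rewrite !inE /= (negbTE (s_source e)). Qed.

Lemma out_ports_sink : out_ports (inl t) = set0.
Proof. by apply/setP => -[e b]; rewrite !inE /= (negbTE (t_sink e)). Qed.

Lemma form_bound_source :
  form_bound (vertex_fn s) (in_ports (inl s)) (out_ports (inl s)) (frob (fv s)).
Proof.
have s_dep := factor_fn_depends (inl s); rewrite in_ports_source set0U in s_dep.
rewrite [in_ports _]in_ports_source; apply: form_bound_set0l s_dep _ => i.
rewrite (norm_on_vertex_full s) ?in_ports_source ?set0U // => k.
by rewrite vport_out_ports inE s_source.
Qed.

Lemma form_bound_sink :
  form_bound (vertex_fn t) (in_ports (inl t)) (out_ports (inl t)) (frob (fv t)).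
Proof.
have t_dep := factor_fn_depends (inl t); rewrite out_ports_sink setU0 in t_dep.
rewrite [out_ports _]out_ports_sink; apply/form_bound_sym/(form_bound_set0l t_dep) => i.
rewrite (norm_on_vertex_full t) ?out_ports_sink ?setU0 // => k; rewrite vport_in_ports inE.
by case: (port_oriented t k) => [-> // | kt]; move: (t_sink (port g t k)); rewrite kt eqxx.
Qed.

Lemma in_vports_proper v : v != s -> v != t -> (0 < #|in_vports v| < deg g v)%N.
Proof.
move=> vs vt; have /existsP [e /eqP eh] : [exists e, oh e == v].
  apply: contraNT vs => /existsPn no_in.
  by apply/eqP/s_uniq => e0; apply: no_in.
have /existsP [e' /eqP et] : [exists e, ot e == v].
  apply: contraNT vt => /existsPn no_out.
  by apply/eqP/t_uniq => e0; apply: no_out.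
have [k ke] := port_of_ohead v e eh; have [k' ke'] := port_of_otail v e' et.
rewrite card_gt0; apply/andP; split; first by apply/set0Pn; exists k; rewrite inE ke eh.
rewrite -[X in (_ < X)%N]card_ord -cardsT; apply: proper_card; rewrite properT.
have k'_out : k' \notin in_vports v by rewrite inE ke' -et ohead_neq_otail.
by apply: contraNneq k'_out => ->; rewrite inE.
Qed.

Lemma form_bound_edge e :
  form_bound (edge_fn e) (in_ports (inr e)) (out_ports (inr e)) (mxopnorm (fe e)).
Proof.
have src_dst : form_bound (edge_fn e) [set (e, false)] [set (e, true)] (mxopnorm (fe e)).
  rewrite /mxopnorm.
  apply: form_bound_param (set_at_param n _) (set_at_param n _) _ _ => [|a b i].
    by rewrite disjoints1 inE xpair_eqE eqxx.
  by rewrite /edge_fn !ffunE !xpair_eqE !eqxx.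
by rewrite /=; case: (dir e); last apply: form_bound_sym.
Qed.

Lemma factor_bound p : form_bound (factor_fn p) (in_ports p) (out_ports p) (factor_cost p).
Proof.
case: p => [v | e] /=; last exact: form_bound_edge.
have [-> | vs] := eqVneq v s; first exact: form_bound_source.
have [-> | vt] := eqVneq v t; first exact: form_bound_sink.
apply: form_bound_le (form_bound_vertex v).
by rewrite /matopnorm; apply: le_bigmax_cond; apply: in_vports_proper.
Qed.

Lemma factor_cost_ge0 p : 0 <= factor_cost p.
Proof.
case: p => [v | e] /=; last exact: opnorm2_ge0.
by case: ifP => _; [exact: l2_ge0 | exact: bigmax_ge_id].
Qed.

Lemma tn_val_le_prod_cost : `|tn_val fv fe| <= \prod_p factor_cost p.
Proof.
have := abs_sum_prod_le factor_fn_depends factor_bound factor_cost_ge0 out_ports_cover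
  out_ports_uniq in_ports_cover in_ports_uniq factor_rank_lt.
by congr (`|_| <= _); apply: eq_bigr => x _; rewrite big_sumType.
Qed.

Lemma prod_factor_costE : s != t ->
  \prod_p factor_cost p = frob (fv s) * frob (fv t)
    * (\prod_(v | (v != s) && (v != t)) matopnorm (fv v)) * \prod_e mxopnorm (fe e).
Proof.
move=> st; rewrite big_sumType /= (bigD1 s) //= (bigD1 t) /=; last by rewrite eq_sym.
rewrite eqxx [t == s]eq_sym (negbTE st) eqxx orbT !mulrA; congr (_ * _ * _).
by apply: eq_bigr => v /andP [vs vt]; rewrite (negbTE vs) (negbTE vt).
Qed.

End BipolarNetwork.

Theorem lemma5p4 (R : realType) (n : nat) (V E : finType) (g : multigraph V E)
    (fv : forall v : V, tensor R n (deg g v)) (fe : E -> 'M[R]_n) (s t : V) :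
  wf_multigraph g -> bipolar g s t ->
  `|tn_val fv fe| <=
    frob (fv s) * frob (fv t)
    * (\prod_(v : V | (v != s) && (v != t)) matopnorm (fv v))
    * (\prod_(e : E) mxopnorm (fe e)).
Proof.
move=> [no_loop port_inj port_incident] [st [dir [acyclic s_source s_uniq t_sink t_uniq]]].
rewrite -prod_factor_costE //.
by apply: (tn_val_le_prod_cost R n V E g fv fe s t dir).
Qed.
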